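(* Let $a$ and $q \geq 1$ be integers with $\gcd(a,q) = 1$. Let $n, k, L$ be positive integers and $N \geq 1$ a real number such that $$L \leq N^n, \qquad q \leq L N^k, \qquad 2^{n+k+1} < N.$$ Let $\mathcal{P}$ be the set of primes in $[N/2, N]$ not dividing $q$. Let $m \leq n$ be a positive integer and let $r_1, \dots, r_m$ be positive integers with $r_1 + \cdots + r_m = n$. Then $$\sum_{l = 1}^{L} \left| \sum_{q_1 \in \mathcal{P}} \cdots \sum_{q_m \in \mathcal{P}} e\!\left(\frac{l\, q_1^{r_1} \cdots q_m^{r_m}\, a}{q}\right) \right| \leq C\, 2^{n+k} n^n \max\!\left(L N^{n/2 + k/2},\ \frac{L N^n}{q^{1/2}}\right),$$ where $C>0$ is an absolute constant.
   Context: $e(x) := e^{2\pi i x}$. *)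

From Stdlib Require Import Reals Lra Lia ZArith Znumtheory List.
Import ListNotations.
Open Scope R_scope.

Definition rsum (xs : list R) : R := fold_right Rplus 0 xs.

(* |sum_{theta in thetas} e(theta)|, with e(x) = exp(2 pi i x) written
   out via its real and imaginary parts cos(2 pi x), sin(2 pi x). *)
Definition abs_exp_sum (thetas : list R) : R :=
  sqrt ( (rsum (map (fun t => cos (2 * PI * t)) thetas)) ^ 2
       + (rsum (map (fun t => sin (2 * PI * t)) thetas)) ^ 2 ).

Fixpoint tuples (P : list nat) (m : nat) : list (list nat) :=
  match m with
  | O => [ [] ]
  | S m' => flat_map (fun p => map (cons p) (tuples P m')) P
  end.

Definition monomial (qs rs : list nat) : Z :=
  fold_right Z.mul 1%Z (map (fun qr => Z.pow (Z.of_nat (fst qr)) (Z.of_nat (snd qr)))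
                            (combine qs rs)).

Definition inner_sum_abs (P : list nat) (rs : list nat) (a q : Z) (l : nat) : R :=
  abs_exp_sum (map (fun qs => IZR (Z.of_nat l * monomial qs rs * a) / IZR q)
                   (tuples P (length rs))).

From Stdlib Require Import Reals Lra Lia Psatz ZArith Znumtheory List Permutation.
Import ListNotations.
Open Scope R_scope.

(* Split the exponents r_i into the
   s exponents equal to 1 and the c exponents >= 2, so that 2c + s <= n.  Fix the
   primes carrying exponents >= 2 (at most |P|^c choices, contributing a weight w)
   and split the s linear primes into ka = min(k, s) and b = s - ka of them.  The
   remaining sum over l and over the linear primes is then a bilinear form
       sum_u | sum_v e(u v c / q) |,    u = l * (ka primes),  v = (b primes),
   with c = w a coprime to q.  Cauchy-Schwarz, completion of the u-sum to full
   periods mod q and orthogonality of additive characters bound it by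
       sqrt (|U| K_u (R_u / q + 1) * |V| q K_v (R_v / q + 1)),
   where R and K are the ranges and maximal multiplicities of u and v.  Unique
   factorisation controls the multiplicities (an integer <= N^e has at most 2e
   prime factors in [N/2, N]), and a final real inequality gives the statement
   with C = 2. *)

Lemma rsum_cons x l : rsum (x :: l) = x + rsum l.
Proof. reflexivity. Qed.

Lemma rsum_app l1 l2 : rsum (l1 ++ l2) = rsum l1 + rsum l2.
Proof. induction l1; simpl; [ring | rewrite IHl1; ring]. Qed.

Lemma rsum_plus {X} (f g : X -> R) l :
  rsum (map (fun x => f x + g x) l) = rsum (map f l) + rsum (map g l).
Proof. induction l; simpl; [ring | rewrite IHl; ring]. Qed.

Lemma rsum_scal {X} (c : R) (f : X -> R) l :
  rsum (map (fun x => c * f x) l) = c * rsum (map f l).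
Proof. induction l; simpl; [ring | rewrite IHl; ring]. Qed.

Lemma rsum_le {X} (f g : X -> R) l :
  (forall x, In x l -> f x <= g x) -> rsum (map f l) <= rsum (map g l).
Proof.
  induction l as [|x l IH]; simpl; intros H; [lra |].
  pose proof (H x (or_introl eq_refl)). pose proof (IH (fun y Hy => H y (or_intror Hy))). lra.
Qed.

Lemma rsum_ext {X} (f g : X -> R) l :
  (forall x, In x l -> f x = g x) -> rsum (map f l) = rsum (map g l).
Proof. intros H. f_equal. apply map_ext_in. exact H. Qed.

Lemma rsum_const {X} (c : R) (l : list X) : rsum (map (fun _ => c) l) = INR (length l) * c.
Proof. induction l; simpl length; [simpl; ring |]. rewrite S_INR. simpl. rewrite IHl. ring. Qed.

Lemma rsum_nonneg {X} (f : X -> R) l :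
  (forall x, In x l -> 0 <= f x) -> 0 <= rsum (map f l).
Proof.
  intros H. replace 0 with (rsum (map (fun _ : X => 0) l)) by (rewrite rsum_const; ring).
  apply rsum_le. exact H.
Qed.

Lemma rsum_flat_map {X Y} (f : Y -> R) (g : X -> list Y) l :
  rsum (map f (flat_map g l)) = rsum (map (fun x => rsum (map f (g x))) l).
Proof. induction l; simpl; [reflexivity |]. rewrite map_app, rsum_app, IHl. reflexivity. Qed.

Lemma rsum_exchange {X Y} (f : X -> Y -> R) xs ys :
  rsum (map (fun x => rsum (map (fun y => f x y) ys)) xs) =
  rsum (map (fun y => rsum (map (fun x => f x y) xs)) ys).
Proof.
  induction xs; simpl.
  - induction ys; simpl; [reflexivity | rewrite <- IHys; ring].
  - rewrite IHxs, <- rsum_plus. reflexivity.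
Qed.

Lemma rsum_filter_split {X} (F : X -> R) (p : X -> bool) l :
  rsum (map F l) = rsum (map F (filter p l)) + rsum (map F (filter (fun x => negb (p x)) l)).
Proof. induction l; simpl; [ring |]. destruct (p a); simpl; rewrite IHl; ring. Qed.

Lemma cauchy_schwarz {X} (f : X -> R) l :
  (rsum (map f l)) ^ 2 <= INR (length l) * rsum (map (fun x => (f x) ^ 2) l).
Proof.
  induction l as [|x l IH]; [simpl; lra |].
  replace (INR (length (x :: l))) with (INR (length l) + 1) by (simpl length; rewrite S_INR; auto).
  rewrite !map_cons, !rsum_cons.
  set (S := rsum (map f l)) in *. set (Q := rsum (map (fun x => f x ^ 2) l)) in *.
  set (m := INR (length l)) in *.
  assert (Hm : 0 <= m) by apply pos_INR.
  assert (HQ : 0 <= Q) by (apply rsum_nonneg; intros; nra).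
  destruct (Req_dec m 0) as [Hm0 | Hm0].
  - rewrite Hm0 in IH |- *. assert (S = 0) as -> by nra. nra.
  - assert (Hcross : 2 * f x * S <= m * (f x) ^ 2 + Q).
    { apply Rmult_le_reg_l with m; [lra |].
      pose proof (pow2_ge_0 (m * f x - S)). nra. }
    nra.
Qed.

Lemma rsum_sq {X} (f : X -> R) l :
  (rsum (map f l)) ^ 2 = rsum (map (fun x => rsum (map (fun y => f x * f y) l)) l).
Proof.
  rewrite (rsum_ext (fun x => rsum (map (fun y => f x * f y) l)) (fun x => rsum (map f l) * f x))
    by (intros x _; rewrite rsum_scal; ring).
  rewrite rsum_scal. ring.
Qed.

Lemma div_nonneg x y : 0 <= x -> 0 < y -> 0 <= x / y.
Proof. intros. unfold Rdiv. apply Rmult_le_pos; [auto | left; apply Rinv_0_lt_compat; auto]. Qed.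

(* Complex numbers are handled through their real and imaginary parts;
   cabs x y is the modulus of x + i y. *)

Definition cabs (x y : R) : R := sqrt (x ^ 2 + y ^ 2).

Lemma cabs_nonneg x y : 0 <= cabs x y.
Proof. apply sqrt_pos. Qed.

Lemma cabs_sq x y : (cabs x y) ^ 2 = x ^ 2 + y ^ 2.
Proof. unfold cabs. rewrite <- Rsqr_pow2. apply Rsqr_sqrt. nra. Qed.

Lemma le_of_sq x y : 0 <= y -> x ^ 2 <= y ^ 2 -> x <= y.
Proof. intros. apply Rsqr_incr_0_var; auto. unfold Rsqr. nra. Qed.

Lemma cabs_triangle a b c d : cabs (a + c) (b + d) <= cabs a b + cabs c d.
Proof.
  pose proof (cabs_nonneg a b). pose proof (cabs_nonneg c d).
  pose proof (cabs_sq a b) as Eab. pose proof (cabs_sq c d) as Ecd.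
  pose proof (cabs_sq (a + c) (b + d)) as Esum.
  set (x := cabs a b) in *. set (y := cabs c d) in *.
  assert (Hdot : a * c + b * d <= x * y).
  { apply le_of_sq; [nra |].
    replace ((x * y) ^ 2) with ((a ^ 2 + b ^ 2) * (c ^ 2 + d ^ 2)) by (rewrite <- Eab, <- Ecd; ring).
    pose proof (pow2_ge_0 (a * d - b * c)). nra. }
  apply le_of_sq; [lra |]. rewrite Esum. nra.
Qed.

Lemma cabs_triangle_sum {X} (re im : X -> R) l :
  cabs (rsum (map re l)) (rsum (map im l)) <= rsum (map (fun x => cabs (re x) (im x)) l).
Proof.
  induction l as [|x l IH].
  - simpl. unfold cabs. replace (0 ^ 2 + 0 ^ 2) with 0 by ring. rewrite sqrt_0. lra.
  - rewrite !map_cons, !rsum_cons. eapply Rle_trans; [apply cabs_triangle |]. lra.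
Qed.

Lemma cabs_sq_exp_sum {X} (th : X -> R) l :
  cabs (rsum (map (fun x => cos (th x)) l)) (rsum (map (fun x => sin (th x)) l)) ^ 2 =
  rsum (map (fun x => rsum (map (fun y => cos (th x - th y)) l)) l).
Proof.
  rewrite cabs_sq, !rsum_sq, <- rsum_plus. apply rsum_ext. intros x _.
  rewrite <- rsum_plus. apply rsum_ext. intros y _. rewrite cos_minus. ring.
Qed.

Lemma shift_by_integer (f : R -> R) x m :
  (forall y (j : nat), f (y + 2 * INR j * PI) = f y) -> f (x + 2 * PI * IZR m) = f x.
Proof.
  intros Hper. destruct (Z_le_gt_dec 0 m).
  - rewrite <- (Z2Nat.id m), <- INR_IZR_INZ by lia.
    rewrite <- (Hper x (Z.to_nat m)). f_equal. ring.
  - assert (E : IZR m = - INR (Z.to_nat (- m))) by (rewrite INR_IZR_INZ, Z2Nat.id, opp_IZR by lia; ring).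
    rewrite E, <- (Hper (x + 2 * PI * - INR (Z.to_nat (- m))) (Z.to_nat (- m))). f_equal. ring.
Qed.

Lemma cos_periodZ x m : cos (x + 2 * PI * IZR m) = cos x.
Proof. apply shift_by_integer. exact cos_period. Qed.

Lemma sin_periodZ x m : sin (x + 2 * PI * IZR m) = sin x.
Proof. apply shift_by_integer. exact sin_period. Qed.

(* Telescoping identity behind the geometric sum of cosines. *)
Lemma cos_sum_telescope (b : R) (Q : nat) :
  2 * sin b * rsum (map (fun t => cos (2 * INR t * b)) (seq 0 Q)) =
  sin ((2 * INR Q - 1) * b) + sin b.
Proof.
  induction Q.
  - simpl. replace ((2 * 0 - 1) * b) with (- b) by ring. rewrite sin_neg. ring.
  - rewrite seq_S, map_app, rsum_app. simpl (map _ [_]).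
    rewrite rsum_cons, Rmult_plus_distr_l, IHQ, S_INR. simpl (0 + Q)%nat. simpl rsum.
    replace ((2 * (INR Q + 1) - 1) * b) with (2 * INR Q * b + b) by ring.
    replace ((2 * INR Q - 1) * b) with (2 * INR Q * b - b) by ring.
    rewrite sin_plus, sin_minus. ring.
Qed.

(* Orthogonality: sum_{t mod Q} e(t h / Q) is Q if Q | h and 0 otherwise
   (real part; this is all the bilinear estimate needs). *)
Lemma character_orthogonality (h : Z) (Q : nat) : (0 < Q)%nat ->
  rsum (map (fun t => cos (2 * PI * (IZR (Z.of_nat t * h) / INR Q))) (seq 0 Q)) =
  if Zdivide_dec (Z.of_nat Q) h then INR Q else 0.
Proof.
  intros HQ. assert (HQR : 0 < INR Q) by (apply lt_0_INR; lia).
  destruct (Zdivide_dec (Z.of_nat Q) h) as [[j Hj] | Hndiv].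
  - subst h. rewrite (rsum_ext _ (fun _ => 1)).
    + rewrite rsum_const, length_seq. ring.
    + intros t _.
      replace (2 * PI * (IZR (Z.of_nat t * (j * Z.of_nat Q)) / INR Q))
        with (0 + 2 * PI * IZR (Z.of_nat t * j))
        by (rewrite !mult_IZR, <- !INR_IZR_INZ; field; lra).
      rewrite cos_periodZ. apply cos_0.
  - set (b := PI * IZR h / INR Q).
    assert (Hsin : sin b <> 0).
    { intros Hs. apply sin_eq_0_0 in Hs. destruct Hs as [j Hj]. apply Hndiv.
      exists j. apply eq_IZR. rewrite mult_IZR, <- INR_IZR_INZ.
      unfold b in Hj. pose proof PI_RGT_0.
      apply Rmult_eq_reg_l with (PI / INR Q); [| apply Rgt_not_eq; apply Rdiv_lt_0_compat; lra].
      field_simplify; lra. }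
    rewrite (rsum_ext _ (fun t => cos (2 * INR t * b)))
      by (intros t _; f_equal; unfold b; rewrite mult_IZR, <- INR_IZR_INZ; field; lra).
    apply Rmult_eq_reg_l with (2 * sin b); [| intro; apply Hsin; lra].
    rewrite cos_sum_telescope, Rmult_0_r.
    replace ((2 * INR Q - 1) * b) with (- b + 2 * PI * IZR h) by (unfold b; field; lra).
    rewrite sin_periodZ, sin_neg. ring.
Qed.

Lemma filter_filter_length {X} (f g : X -> bool) l :
  (length (filter f (filter g l)) <= length (filter f l))%nat.
Proof. induction l; simpl; auto. destruct (g a); simpl; destruct (f a); simpl; lia. Qed.

Lemma nodup_constant_length {X} (l : list X) x0 :
  NoDup l -> (forall x, In x l -> x = x0) -> (length l <= 1)%nat.
Proof.
  intros Hnd H. destruct l as [|x [|y l]]; simpl; try lia.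
  inversion Hnd; subst. exfalso. apply H2. left. rewrite (H x), (H y); simpl; auto.
Qed.

Lemma multiplicity_bound (F : Z -> R) (ws us : list Z) (K : nat) :
  (forall x, 0 <= F x) -> NoDup ws -> (forall u, In u us -> In u ws) ->
  (forall w, (length (filter (Z.eqb w) us) <= K)%nat) ->
  rsum (map F us) <= INR K * rsum (map F ws).
Proof.
  intros HF. revert us. induction ws as [|w0 ws IH]; intros us Hnd Hin HK.
  - destruct us as [|u us]; [simpl; lra |]. exfalso. apply (Hin u). left; auto.
  - inversion Hnd; subst.
    rewrite (rsum_filter_split F (Z.eqb w0)), map_cons, rsum_cons.
    rewrite (rsum_ext F (fun _ => F w0) (filter (Z.eqb w0) us)), rsum_const.
    2:{ intros x Hx. apply filter_In in Hx. destruct Hx as [_ Hx]. apply Z.eqb_eq in Hx. subst. reflexivity. }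
    assert (Hw0 : INR (length (filter (Z.eqb w0) us)) <= INR K) by (apply le_INR; auto).
    assert (Hrest : rsum (map F (filter (fun x => negb (Z.eqb w0 x)) us)) <= INR K * rsum (map F ws)).
    { apply IH; auto.
      - intros u Hu. apply filter_In in Hu. destruct Hu as [Hu Hne].
        destruct (Hin u Hu); auto. subst. rewrite Z.eqb_refl in Hne. discriminate.
      - intros w. eapply Nat.le_trans; [apply filter_filter_length | auto]. }
    pose proof (HF w0). pose proof (pos_INR (length (filter (Z.eqb w0) us))). nra.
Qed.

Section PeriodicSums.
Variables (F : Z -> R) (Q : nat).
Hypothesis F_periodic : forall t, F (t + Z.of_nat Q)%Z = F t.

Lemma periodic_window s :
  rsum (map (fun t => F (Z.of_nat t)) (seq s Q)) = rsum (map (fun t => F (Z.of_nat t)) (seq 0 Q)).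
Proof.
  induction s; auto. rewrite <- IHs. destruct Q as [|m]; auto.
  rewrite seq_S. cbn [seq]. rewrite map_app, rsum_app, !map_cons, !rsum_cons.
  replace (Z.of_nat (S s + m)) with (Z.of_nat s + Z.of_nat (S m))%Z by lia.
  rewrite F_periodic. simpl. ring.
Qed.

Lemma periodic_blocks j s :
  rsum (map (fun t => F (Z.of_nat t)) (seq s (j * Q))) =
  INR j * rsum (map (fun t => F (Z.of_nat t)) (seq 0 Q)).
Proof.
  revert s. induction j; intros s; [simpl; ring |].
  replace (S j * Q)%nat with (Q + j * Q)%nat by lia.
  rewrite seq_app, map_app, rsum_app, IHj, periodic_window, S_INR. ring.
Qed.

Lemma periodic_sum_bound (R0 : nat) :
  (0 < Q)%nat -> (forall x, 0 <= F x) ->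
  rsum (map (fun t => F (Z.of_nat t)) (seq 1 R0)) <=
  (INR R0 / INR Q + 1) * rsum (map (fun t => F (Z.of_nat t)) (seq 0 Q)).
Proof.
  intros HQ HF. set (j := (R0 / Q + 1)%nat).
  assert (HQR : 0 < INR Q) by (apply lt_0_INR; lia).
  assert (Hcover : (R0 <= j * Q)%nat).
  { unfold j. pose proof (Nat.div_mod R0 Q). pose proof (Nat.mod_upper_bound R0 Q). nia. }
  assert (Hj : INR j <= INR R0 / INR Q + 1).
  { unfold j. rewrite plus_INR. apply Rplus_le_compat_r.
    apply Rmult_le_reg_r with (INR Q); auto. unfold Rdiv.
    rewrite Rmult_assoc, Rinv_l, Rmult_1_r, <- mult_INR by lra.
    apply le_INR. rewrite Nat.mul_comm. apply Nat.Div0.mul_div_le. }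
  assert (0 <= rsum (map (fun t => F (Z.of_nat t)) (seq 0 Q))) by (apply rsum_nonneg; auto).
  apply Rle_trans with (rsum (map (fun t => F (Z.of_nat t)) (seq 1 (j * Q)))).
  - replace (j * Q)%nat with (R0 + (j * Q - R0))%nat by lia.
    rewrite seq_app, map_app, rsum_app.
    assert (0 <= rsum (map (fun t => F (Z.of_nat t)) (seq (1 + R0) (j * Q - R0))))
      by (apply rsum_nonneg; auto).
    lra.
  - rewrite periodic_blocks. nra.
Qed.

End PeriodicSums.

Lemma residue_class_sum (Q : nat) (v : Z) :
  (0 < Q)%nat ->
  rsum (map (fun t => if Zdivide_dec (Z.of_nat Q) (Z.of_nat t - v) then 1 else 0) (seq 0 Q)) <= 1.
Proof.
  intros HQ.
  set (D := fun t => if Zdivide_dec (Z.of_nat Q) (Z.of_nat t - v) then true else false).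
  rewrite (rsum_filter_split _ D).
  rewrite (rsum_ext _ (fun _ => 1) (filter D _)), (rsum_ext _ (fun _ => 0) (filter (fun x => negb (D x)) _)), !rsum_const.
  2:{ intros t Ht. apply filter_In in Ht. destruct Ht as [_ Ht]. unfold D in Ht.
       destruct (Zdivide_dec (Z.of_nat Q) (Z.of_nat t - v)); [discriminate | reflexivity]. }
  2:{ intros t Ht. apply filter_In in Ht. destruct Ht as [_ Ht]. unfold D in Ht.
       destruct (Zdivide_dec (Z.of_nat Q) (Z.of_nat t - v)); [reflexivity | discriminate]. }
  rewrite Rmult_0_r, Rplus_0_r, Rmult_1_r. replace 1 with (INR 1) by reflexivity. apply le_INR.
  apply (nodup_constant_length _ (Z.to_nat (v mod Z.of_nat Q))).
  - apply NoDup_filter, seq_NoDup.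
  - intros t Ht. apply filter_In in Ht. destruct Ht as [Ht Hd]. apply in_seq in Ht. unfold D in Hd.
    destruct (Zdivide_dec (Z.of_nat Q) (Z.of_nat t - v)) as [[j Hj] |]; [| discriminate].
    apply Nat2Z.inj. rewrite Z2Nat.id by (apply Z.mod_pos_bound; lia).
    rewrite <- (Z.mod_small (Z.of_nat t) (Z.of_nat Q)) by lia.
    replace (Z.of_nat t) with (v + j * Z.of_nat Q)%Z by lia. apply Z.mod_add. lia.
Qed.

Lemma nodup_seqZ s m : NoDup (map Z.of_nat (seq s m)).
Proof. apply NoDup_map_NoDup_ForallPairs; [| apply seq_NoDup]. intros x y _ _ H. lia. Qed.

Lemma in_seqZ u R0 : (1 <= u <= Z.of_nat R0)%Z -> In u (map Z.of_nat (seq 1 R0)).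
Proof. intros H. apply in_map_iff. exists (Z.to_nat u). split; [lia |]. apply in_seq. lia. Qed.

Section Bilinear.
Variables (Q : nat) (c : Z).
Hypothesis Q_pos : (0 < Q)%nat.
Hypothesis c_coprime : rel_prime c (Z.of_nat Q).

Definition phase (u v : Z) : R := 2 * PI * (IZR (u * v * c) / INR Q).

Definition row_sq (vs : list Z) (t : Z) : R :=
  cabs (rsum (map (fun v => cos (phase t v)) vs)) (rsum (map (fun v => sin (phase t v)) vs)) ^ 2.

Lemma phase_period t v : phase (t + Z.of_nat Q) v = phase t v + 2 * PI * IZR (v * c).
Proof.
  unfold phase. assert (0 < INR Q) by (apply lt_0_INR; lia).
  replace ((t + Z.of_nat Q) * v * c)%Z with (t * v * c + Z.of_nat Q * (v * c))%Z by ring.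
  rewrite plus_IZR, !mult_IZR, <- INR_IZR_INZ. field. lra.
Qed.

Lemma row_sq_period vs t : row_sq vs (t + Z.of_nat Q) = row_sq vs t.
Proof.
  unfold row_sq. do 2 f_equal; apply rsum_ext; intros v _; rewrite phase_period.
  - apply cos_periodZ.
  - apply sin_periodZ.
Qed.

Lemma row_sq_nonneg vs t : 0 <= row_sq vs t.
Proof. unfold row_sq. apply pow2_ge_0. Qed.

Definition congruent_to (v w : Z) : R := if Zdivide_dec (Z.of_nat Q) (w - v) then 1 else 0.

Lemma congruent_to_nonneg v w : 0 <= congruent_to v w.
Proof. unfold congruent_to. destruct Zdivide_dec; lra. Qed.

Lemma congruent_to_period v t : congruent_to v (t + Z.of_nat Q) = congruent_to v t.
Proof.
  unfold congruent_to.
  destruct (Zdivide_dec (Z.of_nat Q) (t + Z.of_nat Q - v)) as [[j Hj] | H1];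
  destruct (Zdivide_dec (Z.of_nat Q) (t - v)) as [[j' Hj'] | H2]; auto.
  - exfalso. apply H2. exists (j - 1)%Z. lia.
  - exfalso. apply H1. exists (j' + 1)%Z. lia.
Qed.

Lemma congruent_count (vs : list Z) (Rv Kv : nat) (v : Z) :
  (forall x, In x vs -> (1 <= x <= Z.of_nat Rv)%Z) ->
  (forall w, (length (filter (Z.eqb w) vs) <= Kv)%nat) ->
  rsum (map (congruent_to v) vs) <= INR Kv * (INR Rv / INR Q + 1).
Proof.
  intros Hrange Hmult.
  eapply Rle_trans.
  { apply (multiplicity_bound (congruent_to v) (map Z.of_nat (seq 1 Rv)) vs Kv); auto.
    - apply congruent_to_nonneg.
    - apply nodup_seqZ.
    - intros u Hu. apply in_seqZ. auto. }
  rewrite map_map. apply Rmult_le_compat_l; [apply pos_INR |].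
  eapply Rle_trans.
  { apply (periodic_sum_bound _ Q); auto using congruent_to_period, congruent_to_nonneg. }
  assert (0 <= INR Rv / INR Q) by (apply div_nonneg; [apply pos_INR | apply lt_0_INR; lia]).
  pose proof (residue_class_sum Q v Q_pos). unfold congruent_to. nra.
Qed.

(* Orthogonality turns the complete mean square of a row into a count of
   congruent pairs (this is where c coprime to Q is used). *)
Lemma complete_row_sq_sum (vs : list Z) (Rv Kv : nat) :
  (forall x, In x vs -> (1 <= x <= Z.of_nat Rv)%Z) ->
  (forall w, (length (filter (Z.eqb w) vs) <= Kv)%nat) ->
  rsum (map (fun t => row_sq vs (Z.of_nat t)) (seq 0 Q)) <=
  INR (length vs) * INR Q * (INR Kv * (INR Rv / INR Q + 1)).
Proof.
  intros Hrange Hmult.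
  assert (HQR : 0 < INR Q) by (apply lt_0_INR; lia).
  assert (Hcong : forall x y, (Z.of_nat Q | (x - y) * c) <-> (Z.of_nat Q | y - x)).
  { intros x y. split.
    - intros Hd. rewrite Z.mul_comm in Hd. apply Gauss in Hd; [| apply rel_prime_sym; auto].
      destruct Hd as [j Hj]. exists (- j)%Z. lia.
    - intros [j Hj]. exists (- j * c)%Z. lia. }
  transitivity (rsum (map (fun x => rsum (map (fun y => INR Q * congruent_to x y) vs)) vs)).
  - right. unfold row_sq.
    rewrite (rsum_ext _ (fun t => rsum (map (fun x => rsum (map (fun y =>
       cos (2 * PI * (IZR (Z.of_nat t * ((x - y) * c)) / INR Q))) vs)) vs))).
    2:{ intros t _. rewrite cabs_sq_exp_sum. apply rsum_ext; intros x _. apply rsum_ext; intros y _.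
        f_equal. unfold phase. rewrite !mult_IZR, minus_IZR. field. lra. }
    rewrite rsum_exchange. apply rsum_ext. intros x _.
    rewrite rsum_exchange. apply rsum_ext. intros y _.
    rewrite character_orthogonality by auto. unfold congruent_to.
    destruct (Zdivide_dec (Z.of_nat Q) ((x - y) * c)) as [H1 | H1];
    destruct (Zdivide_dec (Z.of_nat Q) (y - x)) as [H2 | H2]; try ring;
    exfalso; [apply H2 | apply H1]; apply Hcong; auto.
  - rewrite (rsum_ext _ (fun x => INR Q * rsum (map (congruent_to x) vs))) by (intros; apply rsum_scal).
    rewrite rsum_scal.
    eapply Rle_trans.
    { apply Rmult_le_compat_l; [apply pos_INR |].
      apply (rsum_le _ (fun _ => INR Kv * (INR Rv / INR Q + 1))). intros x _.
      apply congruent_count; auto. }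
    rewrite rsum_const. lra.
Qed.

Definition bilinear_form (us vs : list Z) : R :=
  rsum (map (fun u => cabs (rsum (map (fun v => cos (phase u v)) vs))
                           (rsum (map (fun v => sin (phase u v)) vs))) us).

(* Cauchy-Schwarz over u, then completion of the u-range to full periods. *)
Lemma bilinear_bound (us vs : list Z) (Ru Rv Ku Kv : nat) :
  (forall x, In x us -> (1 <= x <= Z.of_nat Ru)%Z) ->
  (forall w, (length (filter (Z.eqb w) us) <= Ku)%nat) ->
  (forall x, In x vs -> (1 <= x <= Z.of_nat Rv)%Z) ->
  (forall w, (length (filter (Z.eqb w) vs) <= Kv)%nat) ->
  bilinear_form us vs <= sqrt (INR (length us) * (INR Ku * (INR Ru / INR Q + 1)) *
                               (INR (length vs) * INR Q * (INR Kv * (INR Rv / INR Q + 1)))).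
Proof.
  intros Hu HKu Hv HKv.
  assert (HQR : 0 < INR Q) by (apply lt_0_INR; lia).
  assert (0 <= bilinear_form us vs) by (apply rsum_nonneg; intros; apply cabs_nonneg).
  rewrite <- (sqrt_pow2 (bilinear_form us vs)) by auto. apply sqrt_le_1_alt.
  eapply Rle_trans; [apply cauchy_schwarz |].
  rewrite Rmult_assoc. apply Rmult_le_compat_l; [apply pos_INR |].
  change (rsum (map (row_sq vs) us) <= INR Ku * (INR Ru / INR Q + 1) *
    (INR (length vs) * INR Q * (INR Kv * (INR Rv / INR Q + 1)))).
  eapply Rle_trans.
  { apply (multiplicity_bound (row_sq vs) (map Z.of_nat (seq 1 Ru)) us Ku); auto.
    - apply row_sq_nonneg.
    - apply nodup_seqZ.
    - intros u Hu'. apply in_seqZ. auto. }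
  rewrite map_map, Rmult_assoc. apply Rmult_le_compat_l; [apply pos_INR |].
  eapply Rle_trans.
  { apply (periodic_sum_bound _ Q); auto using row_sq_period, row_sq_nonneg. }
  apply Rmult_le_compat_l.
  - assert (0 <= INR Ru / INR Q) by (apply div_nonneg; [apply pos_INR | lra]). lra.
  - apply (complete_row_sq_sum vs Rv Kv); auto.
Qed.

End Bilinear.

Lemma in_tuples (P : list nat) m x :
  In x (tuples P m) <-> (length x = m /\ forall p, In p x -> In p P).
Proof.
  revert x. induction m; intros x; simpl.
  - split.
    + intros [<- | []]. split; [reflexivity | intros p []].
    + intros [H _]. destruct x; [auto | discriminate].
  - rewrite in_flat_map. split.
    + intros [p [Hp Hx]]. apply in_map_iff in Hx. destruct Hx as [y [<- Hy]].
      apply IHm in Hy. destruct Hy as [Hl Hy]. simpl. split; [lia |].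
      intros p0 [<- | H]; auto.
    + intros [Hl H]. destruct x as [|p y]; [discriminate |]. exists p.
      split; [apply H; left; auto |]. apply in_map, IHm. simpl in Hl.
      split; [lia |]. intros p0 Hp0. apply H. right; auto.
Qed.

Lemma length_tuples (P : list nat) m : length (tuples P m) = (length P ^ m)%nat.
Proof.
  induction m; simpl; auto. rewrite (flat_map_constant_length (c := length (tuples P m))).
  - rewrite IHm. lia.
  - intros p _. apply length_map.
Qed.

Lemma nodup_tuples (P : list nat) m : NoDup P -> NoDup (tuples P m).
Proof.
  intros HP. induction m as [|m IH]; simpl; [constructor; [intros [] | constructor] |].
  revert IH. generalize (tuples P m) as T. intros T HT. clear m.
  induction HP as [|p P Hp HP IHP]; simpl; [constructor |].
  apply NoDup_app; auto.
  - apply NoDup_map_NoDup_ForallPairs; auto. intros x y _ _ H. inversion H; auto.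
  - intros x Hx Hx'. apply in_map_iff in Hx. destruct Hx as [y [<- _]].
    apply in_flat_map in Hx'. destruct Hx' as [p' [Hp' Hy]]. apply in_map_iff in Hy.
    destruct Hy as [z [Hz _]]. inversion Hz; subst. auto.
Qed.

Definition tuple_sum (P : list nat) (rs : list nat) (f : Z -> R) : R :=
  rsum (map (fun x => f (monomial x rs)) (tuples P (length rs))).

Lemma tuple_sum_ext P rs f g : (forall w, f w = g w) -> tuple_sum P rs f = tuple_sum P rs g.
Proof. intros H. unfold tuple_sum. apply rsum_ext. auto. Qed.

Lemma tuple_sum_le P rs f g :
  (forall x, In x (tuples P (length rs)) -> f (monomial x rs) <= g (monomial x rs)) ->
  tuple_sum P rs f <= tuple_sum P rs g.
Proof. intros H. unfold tuple_sum. apply rsum_le. auto. Qed.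

Lemma tuple_sum_const P rs K : tuple_sum P rs (fun _ => K) = INR (length P ^ length rs) * K.
Proof. unfold tuple_sum. rewrite rsum_const, length_tuples. reflexivity. Qed.

Lemma tuple_sum_triangle P rs F G :
  cabs (tuple_sum P rs F) (tuple_sum P rs G) <= tuple_sum P rs (fun w => cabs (F w) (G w)).
Proof. unfold tuple_sum. apply (cabs_triangle_sum (fun x => F (monomial x rs)) (fun x => G (monomial x rs))). Qed.

Lemma tuple_sum_exchange {X} P rs (f : X -> Z -> R) ls :
  rsum (map (fun l => tuple_sum P rs (fun w => f l w)) ls) =
  tuple_sum P rs (fun w => rsum (map (fun l => f l w) ls)).
Proof. unfold tuple_sum. apply (rsum_exchange (fun l x => f l (monomial x rs))). Qed.

Lemma tuple_sum_nil P f : tuple_sum P [] f = f 1%Z.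
Proof. unfold tuple_sum, monomial. simpl. ring. Qed.

Lemma tuple_sum_cons P r rs f :
  tuple_sum P (r :: rs) f =
  rsum (map (fun p => tuple_sum P rs (fun w => f (Z.of_nat p ^ Z.of_nat r * w)%Z)) P).
Proof.
  unfold tuple_sum. simpl length. cbn [tuples]. rewrite rsum_flat_map.
  apply rsum_ext. intros p _. rewrite map_map. reflexivity.
Qed.

Lemma tuple_sum_perm P rs rs' : Permutation rs rs' -> forall f, tuple_sum P rs f = tuple_sum P rs' f.
Proof.
  induction 1 as [| r rs rs' _ IH | r r' rs | rs rs' rs'' _ IH1 _ IH2]; intros f.
  - reflexivity.
  - rewrite !tuple_sum_cons. apply rsum_ext. intros p _. apply IH.
  - rewrite !tuple_sum_cons.
    rewrite (rsum_ext _ (fun p => rsum (map (fun p0 => tuple_sum P rs (fun w =>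
       f (Z.of_nat p ^ Z.of_nat r' * (Z.of_nat p0 ^ Z.of_nat r * w)))%Z) P)))
      by (intros p _; apply tuple_sum_cons).
    rewrite rsum_exchange. apply rsum_ext; intros p _. rewrite tuple_sum_cons.
    apply rsum_ext; intros p0 _. apply tuple_sum_ext. intros w. f_equal. ring.
  - rewrite IH1. apply IH2.
Qed.

Lemma tuple_sum_app P rs1 rs2 f :
  tuple_sum P (rs1 ++ rs2) f =
  tuple_sum P rs1 (fun w1 => tuple_sum P rs2 (fun w2 => f (w1 * w2)%Z)).
Proof.
  revert f. induction rs1 as [|r rs1 IH]; intros f.
  - rewrite tuple_sum_nil. apply tuple_sum_ext. intros w. f_equal. ring.
  - simpl app. rewrite !tuple_sum_cons. apply rsum_ext. intros p _. rewrite IH.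
    apply tuple_sum_ext. intros w. apply tuple_sum_ext. intros w2. f_equal. ring.
Qed.

Definition zprod (x : list nat) : Z := fold_right Z.mul 1%Z (map Z.of_nat x).

Lemma monomial_ones x b : length x = b -> monomial x (repeat 1%nat b) = zprod x.
Proof.
  revert b. induction x as [|p x IH]; intros b Hb; simpl in Hb; subst; [reflexivity |].
  unfold monomial, zprod in *. simpl. rewrite IH by auto. f_equal. apply Z.pow_1_r.
Qed.

Lemma tuple_sum_ones P m F : tuple_sum P (repeat 1%nat m) F = rsum (map (fun x => F (zprod x)) (tuples P m)).
Proof.
  unfold tuple_sum. rewrite repeat_length. apply rsum_ext. intros x Hx.
  apply in_tuples in Hx. rewrite monomial_ones; tauto.
Qed.

Section PrimeProducts.
Local Open Scope Z_scope.

Lemma zprod_ge_1 x : (forall p, In p x -> (1 <= p)%nat) -> 1 <= zprod x.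
Proof.
  induction x as [|p x IH]; intros H; unfold zprod in *; simpl; [lia |].
  pose proof (H p (or_introl eq_refl)). pose proof (IH (fun j Hj => H j (or_intror Hj))). nia.
Qed.

Lemma zprod_le_pow x B : (forall p, In p x -> (p <= B)%nat) ->
  zprod x <= Z.of_nat B ^ Z.of_nat (length x).
Proof.
  induction x as [|p x IH]; intros H; unfold zprod in *; [simpl; lia |].
  cbn [length map fold_right]. rewrite Nat2Z.inj_succ, Z.pow_succ_r by lia.
  pose proof (H p (or_introl eq_refl)). pose proof (IH (fun j Hj => H j (or_intror Hj))).
  assert (0 <= fold_right Z.mul 1 (map Z.of_nat x)).
  { clear. induction x; simpl; lia. }
  nia.
Qed.

Lemma divides_zprod j x : In j x -> (Z.of_nat j | zprod x).
Proof.
  induction x as [|k x IH]; intros H; unfold zprod in *; simpl in *; [destruct H |].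
  destruct H as [<- | H].
  - apply Z.divide_factor_l.
  - apply Z.divide_mul_r. auto.
Qed.

Lemma prime_divisor_of_zprod p x : prime p -> (forall j, In j x -> prime (Z.of_nat j)) ->
  (p | zprod x) -> exists j, In j x /\ p = Z.of_nat j.
Proof.
  intros Hp. induction x as [|j x IH]; intros Hx Hd; unfold zprod in *; simpl in *.
  - apply Z.divide_1_r in Hd. pose proof (prime_ge_2 p Hp). lia.
  - apply prime_mult in Hd; auto. destruct Hd as [Hd | Hd].
    + exists j. split; auto. apply prime_div_prime; auto.
    + destruct IH as [j' [H1 H2]]; auto. exists j'. auto.
Qed.

Lemma mul_divide_coprime a b w : rel_prime a b -> (a | w) -> (b | w) -> (a * b | w).
Proof.
  intros Hab [k ->] Hb. assert (Hk : (b | k)).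
  { apply Gauss with a; [rewrite Z.mul_comm; auto | apply rel_prime_sym; auto]. }
  destruct Hk as [j ->]. exists j. ring.
Qed.

Lemma zprod_divides S w : NoDup S -> (forall p, In p S -> prime (Z.of_nat p) /\ (Z.of_nat p | w)) ->
  (zprod S | w).
Proof.
  induction S as [|p S IH]; intros Hnd H; unfold zprod in *; simpl.
  - apply Z.divide_1_l.
  - inversion Hnd; subst. destruct (H p (or_introl eq_refl)) as [Hp Hpw].
    apply mul_divide_coprime; auto.
    + apply prime_rel_prime; auto. intros Hd. apply prime_divisor_of_zprod in Hd; auto.
      * destruct Hd as [j [Hj Hpj]]. apply Nat2Z.inj in Hpj. subst. auto.
      * intros j Hj. apply H. right. auto.
    + apply IH; auto. intros j Hj. apply H. right. auto.
Qed.

Lemma rel_prime_pow p r q : rel_prime p q -> rel_prime (p ^ Z.of_nat r) q.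
Proof.
  intros H. apply rel_prime_sym. induction r.
  - apply rel_prime_sym, rel_prime_1.
  - rewrite Nat2Z.inj_succ, Z.pow_succ_r by lia. apply rel_prime_mult; auto.
    apply rel_prime_sym; auto.
Qed.

Lemma rel_prime_monomial x rs q : (forall p, In p x -> prime (Z.of_nat p) /\ ~ (Z.of_nat p | q)) ->
  rel_prime (monomial x rs) q.
Proof.
  revert rs. induction x as [|p x IH]; intros rs H; destruct rs as [|r rs]; unfold monomial; simpl;
    try apply rel_prime_1.
  apply rel_prime_sym, rel_prime_mult; apply rel_prime_sym.
  - apply rel_prime_pow. destruct (H p (or_introl eq_refl)). apply prime_rel_prime; auto.
  - apply IH. intros j Hj. apply H. right. auto.
Qed.

End PrimeProducts.

Definition prime_divisors (P : list nat) (w : Z) : list nat :=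
  filter (fun p => if Zdivide_dec (Z.of_nat p) w then true else false) P.

Lemma in_prime_divisors P w p : In p (prime_divisors P w) <-> In p P /\ (Z.of_nat p | w)%Z.
Proof.
  unfold prime_divisors. rewrite filter_In.
  destruct (Zdivide_dec (Z.of_nat p) w); intuition discriminate.
Qed.

Lemma filter_length_mono {X} (f g : X -> bool) l :
  (forall x, f x = true -> g x = true) -> (length (filter f l) <= length (filter g l))%nat.
Proof.
  intros H. induction l as [|x l IH]; simpl; auto.
  destruct (f x) eqn:Ef; [rewrite (H x Ef) |]; simpl; [lia |]. destruct (g x); simpl; lia.
Qed.

Section PrimeTuples.
Variable P : list nat.
Hypothesis P_nodup : NoDup P.
Hypothesis P_prime : forall p, In p P -> prime (Z.of_nat p).

(* Tuples of primes of P whose product divides w are tuples of prime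
   divisors of w: there are at most |prime_divisors P w|^a of them. *)
Lemma dividing_tuples_count w a :
  (length (filter (fun x => if Zdivide_dec (zprod x) w then true else false) (tuples P a))
    <= length (prime_divisors P w) ^ a)%nat.
Proof.
  rewrite <- length_tuples. apply NoDup_incl_length.
  - apply NoDup_filter, nodup_tuples. auto.
  - intros y Hy. apply filter_In in Hy. destruct Hy as [Hy Hd].
    destruct (Zdivide_dec (zprod y) w) as [Hyw |]; [| discriminate].
    apply in_tuples in Hy. destruct Hy as [Hl Hin]. apply in_tuples. split; auto.
    intros j Hj. apply in_prime_divisors. split; auto.
    eapply Z.divide_trans; [apply divides_zprod; eauto | auto].
Qed.

(* Unique factorisation: a product of b primes arises from at most b^b tuples. *)
Lemma product_multiplicity b w :
  (length (filter (Z.eqb w) (map zprod (tuples P b))) <= b ^ b)%nat.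
Proof.
  rewrite filter_map_swap, length_map.
  destruct (filter (fun x => Z.eqb w (zprod x)) (tuples P b)) as [|x0 rest] eqn:Ef; [simpl; lia |].
  assert (Hx0 : In x0 (filter (fun x => Z.eqb w (zprod x)) (tuples P b))) by (rewrite Ef; left; auto).
  apply filter_In in Hx0. destruct Hx0 as [Hx0 Hw0]. apply Z.eqb_eq in Hw0.
  apply in_tuples in Hx0. destruct Hx0 as [Hl0 Hin0].
  rewrite <- Ef. eapply Nat.le_trans.
  { apply (filter_length_mono _ (fun x => if Zdivide_dec (zprod x) w then true else false)).
    intros x Hx. apply Z.eqb_eq in Hx. rewrite Hx.
    destruct (Zdivide_dec (zprod x) (zprod x)) as [| Hn]; [auto | exfalso; apply Hn, Z.divide_refl]. }
  eapply Nat.le_trans; [apply dividing_tuples_count |]. apply Nat.pow_le_mono_l.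
  rewrite <- Hl0. apply NoDup_incl_length.
  - apply NoDup_filter. auto.
  - intros j Hj. apply in_prime_divisors in Hj. destruct Hj as [HjP Hjw]. rewrite Hw0 in Hjw.
    apply prime_divisor_of_zprod in Hjw; auto.
    destruct Hjw as [j' [Hj' E]]. apply Nat2Z.inj in E. subst. auto.
Qed.

(* w occurs in [l * zprod x | x in P^a, 1 <= l <= L] at most
   |prime_divisors P w|^a times: x determines l. *)
Lemma scaled_product_multiplicity a L w :
  (length (filter (Z.eqb w) (flat_map (fun x => map (fun l => (Z.of_nat l * zprod x)%Z) (seq 1 L)) (tuples P a)))
    <= length (prime_divisors P w) ^ a)%nat.
Proof.
  assert (Hpos : forall x, In x (tuples P a) -> (1 <= zprod x)%Z).
  { intros x Hx. apply zprod_ge_1. intros p Hp. apply in_tuples in Hx.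
    pose proof (prime_ge_2 _ (P_prime p (proj2 Hx p Hp))). lia. }
  eapply Nat.le_trans; [| apply dividing_tuples_count].
  induction (tuples P a) as [|x T IH]; simpl; [lia |].
  rewrite filter_app, length_app.
  assert (IHT : (length (filter (Z.eqb w) (flat_map (fun x => map (fun l => (Z.of_nat l * zprod x)%Z) (seq 1 L)) T))
     <= length (filter (fun x => if Zdivide_dec (zprod x) w then true else false) T))%nat)
    by (apply IH; intros y Hy; apply Hpos; right; auto).
  pose proof (Hpos x (or_introl eq_refl)) as Hx.
  rewrite filter_map_swap, length_map.
  destruct (Zdivide_dec (zprod x) w) as [Hd | Hnd]; simpl.
  - assert (Hone : (length (filter (fun l => Z.eqb w (Z.of_nat l * zprod x)) (seq 1 L)) <= 1)%nat).
    { apply (nodup_constant_length _ (Z.to_nat (w / zprod x))).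
      - apply NoDup_filter, seq_NoDup.
      - intros l Hl. apply filter_In in Hl. destruct Hl as [Hl E]. apply Z.eqb_eq in E.
        apply in_seq in Hl. rewrite E, Z.div_mul by lia. lia. }
    lia.
  - assert (Hnone : forall l, ~ In l (filter (fun l => Z.eqb w (Z.of_nat l * zprod x)) (seq 1 L))).
    { intros l Hl. apply filter_In in Hl. destruct Hl as [_ E]. apply Z.eqb_eq in E.
      apply Hnd. exists (Z.of_nat l). lia. }
    destruct (filter (fun l => Z.eqb w (Z.of_nat l * zprod x)) (seq 1 L)) as [|l0 rest];
      [simpl; lia | exfalso; apply (Hnone l0); left; auto].
Qed.

End PrimeTuples.

(* The square of the target bound, without the constants:
   max(N^(n+k), N^(2n)/q). *)
Definition target_sq (N qR : R) (n k : nat) : R := Rmax (N ^ (n + k)) (N ^ (2 * n) / qR).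

Lemma sqrt_pow_Rpower (N : R) (n k : nat) : 0 < N ->
  sqrt (N ^ (n + k)) = Rpower N (INR n / 2 + INR k / 2).
Proof.
  intros HN. apply sqrt_lem_1.
  - apply pow_le; lra.
  - left. apply exp_pos.
  - rewrite <- Rpower_plus, <- Rpower_pow by auto. f_equal. rewrite plus_INR. field.
Qed.

Lemma sqrt_target_sq (N Ln qR : R) (n k : nat) : 1 <= N -> 1 <= qR -> 0 <= Ln ->
  Ln * sqrt (target_sq N qR n k) =
  Rmax (Ln * Rpower N (INR n / 2 + INR k / 2)) (Ln * N ^ n / sqrt qR).
Proof.
  intros HN Hq HL.
  replace (Ln * N ^ n / sqrt qR) with (Ln * (N ^ n / sqrt qR)) by (unfold Rdiv; ring).
  rewrite RmaxRmult by lra. f_equal. unfold target_sq.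
  assert (Hsq : sqrt (N ^ (2 * n) / qR) = N ^ n / sqrt qR).
  { rewrite sqrt_div_alt by lra. f_equal.
    replace (2 * n)%nat with (n * 2)%nat by lia. rewrite pow_mult. apply sqrt_pow2, pow_le. lra. }
  rewrite <- Hsq, <- sqrt_pow_Rpower by lra.
  unfold Rmax. destruct (Rle_dec (N ^ (n + k)) (N ^ (2 * n) / qR)) as [H1 | H1];
  destruct (Rle_dec (sqrt (N ^ (n + k))) (sqrt (N ^ (2 * n) / qR))) as [H2 | H2]; auto.
  - exfalso. apply H2, sqrt_le_1_alt. auto.
  - exfalso. apply H1. apply sqrt_le_0 in H2; auto.
    + apply pow_le. lra.
    + apply div_nonneg; [apply pow_le |]; lra.
Qed.

(* The term L N^(2c+s+b) of the expanded bilinear bound.  When b > 0 all of the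
   k extra linear primes went into u, so 2c + s + b <= 2n - k, and q <= L N^k
   trades the missing factor N^k for L / q. *)
Lemma middle_term_bound (N Ln qR : R) (n k s c ka b : nat) :
  1 <= N -> 1 <= Ln -> 1 <= qR -> qR <= Ln * N ^ k -> ka = Nat.min k s -> b = (s - ka)%nat ->
  (2 * c + s <= n)%nat ->
  Ln * N ^ (2 * c + s + b) <= Ln ^ 2 * target_sq N qR n k.
Proof.
  intros HN HL Hq HqL Hka Hb Hc.
  set (M := target_sq N qR n k).
  assert (M1 : N ^ (n + k) <= M) by apply Rmax_l.
  assert (M2 : N ^ (2 * n) / qR <= M) by apply Rmax_r.
  assert (Pmono : forall m m', (m <= m')%nat -> N ^ m <= N ^ m') by (intros; apply Rle_pow; auto).
  assert (Ppos : forall m, 0 < N ^ m) by (intros; apply pow_lt; lra).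
  assert (HL2 : 0 <= Ln ^ 2) by nra.
  destruct (Nat.eq_dec b 0) as [Hb0 | Hb0].
  - (* no second group of linear primes: N^(2c+s) <= N^(n+k) *)
    rewrite Hb0.
    assert (HM : N ^ (2 * c + s + 0) <= M) by (eapply Rle_trans; [apply Pmono | apply M1]; lia).
    pose proof (Ppos (2 * c + s + 0)%nat).
    apply Rle_trans with (Ln * M); [apply Rmult_le_compat_l; lra |].
    apply Rmult_le_compat_r; nra.
  - (* ka = k < s, and then L N^(2n-k) <= L^2 N^(2n) / q because q <= L N^k *)
    assert (Ln * N ^ (2 * c + s + b) <= Ln * N ^ (2 * n - k)).
    { apply Rmult_le_compat_l; [lra |]. apply Pmono. lia. }
    assert (Ln * N ^ (2 * n - k) <= Ln ^ 2 * (N ^ (2 * n) / qR)).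
    { replace (N ^ (2 * n)) with (N ^ (2 * n - k) * N ^ k) by (rewrite <- pow_add; f_equal; lia).
      pose proof (Ppos (2 * n - k)%nat).
      apply Rmult_le_reg_r with qR; [lra |]. field_simplify; [| lra].
      replace (Ln ^ 2 * N ^ (2 * n - k) * N ^ k) with (Ln * N ^ (2 * n - k) * (Ln * N ^ k)) by ring.
      apply Rmult_le_compat_l; [apply Rmult_le_pos |]; lra. }
    apply Rmult_le_compat_l with (r := Ln ^ 2) in M2; auto. lra.
Qed.

(* Each of the four terms of the expanded bilinear bound is at most
   Ln^2 max(N^(n+k), N^(2n)/q); this uses q <= L N^k and 2c + s <= n. *)
Lemma expanded_bound (N Ln qR : R) (n k s c ka b : nat) :
  1 <= N -> 1 <= Ln -> 1 <= qR -> qR <= Ln * N ^ k -> ka = Nat.min k s -> b = (s - ka)%nat ->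
  (2 * c + s <= n)%nat ->
  N ^ (2 * c + s) * Ln * ((Ln * N ^ ka + qR) * (N ^ b + qR) / qR)
   <= 4 * (Ln ^ 2 * target_sq N qR n k).
Proof.
  intros HN HL Hq HqL Hka Hb Hc.
  set (M := target_sq N qR n k).
  assert (M1 : N ^ (n + k) <= M) by apply Rmax_l.
  assert (M2 : N ^ (2 * n) / qR <= M) by apply Rmax_r.
  assert (Pmono : forall m m', (m <= m')%nat -> N ^ m <= N ^ m') by (intros; apply Rle_pow; auto).
  assert (Ppos : forall m, 0 < N ^ m) by (intros; apply pow_lt; lra).
  assert (HL2 : 0 <= Ln ^ 2) by nra.
  replace (N ^ (2 * c + s) * Ln * ((Ln * N ^ ka + qR) * (N ^ b + qR) / qR)) with
    (Ln ^ 2 * (N ^ (2 * c + s + ka + b) / qR) + Ln ^ 2 * N ^ (2 * c + s + ka)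
     + Ln * N ^ (2 * c + s + b) + Ln * qR * N ^ (2 * c + s)) by (rewrite !pow_add; field; lra).
  assert (T1 : Ln ^ 2 * (N ^ (2 * c + s + ka + b) / qR) <= Ln ^ 2 * M).
  { apply Rmult_le_compat_l; auto. eapply Rle_trans; [| apply M2].
    unfold Rdiv. apply Rmult_le_compat_r; [left; apply Rinv_0_lt_compat; lra | apply Pmono; lia]. }
  assert (T2 : Ln ^ 2 * N ^ (2 * c + s + ka) <= Ln ^ 2 * M).
  { apply Rmult_le_compat_l; auto. eapply Rle_trans; [| apply M1]. apply Pmono. lia. }
  assert (T4 : Ln * qR * N ^ (2 * c + s) <= Ln ^ 2 * M).
  { apply Rle_trans with (Ln * (Ln * N ^ k) * N ^ (2 * c + s)).
    - apply Rmult_le_compat_r; [left; auto |]. apply Rmult_le_compat_l; lra.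
    - replace (Ln * (Ln * N ^ k) * N ^ (2 * c + s)) with (Ln ^ 2 * N ^ (2 * c + s + k))
        by (rewrite pow_add; ring).
      apply Rmult_le_compat_l; auto. eapply Rle_trans; [| apply M1]. apply Pmono. lia. }
  pose proof (middle_term_bound N Ln qR n k s c ka b HN HL Hq HqL Hka Hb Hc) as T3. fold M in T3.
  lra.
Qed.

Lemma multiplicity_constants (n k ka b : nat) : (1 <= n)%nat -> (ka <= k)%nat -> (ka + b <= n)%nat ->
  ((2 * (n + ka)) ^ ka * b ^ b <= (2 ^ (n + k) * n ^ n) ^ 2)%nat.
Proof.
  intros Hn Hka Hs.
  assert (H1 : ((2 * (n + ka)) ^ ka <= 4 ^ k * n ^ ka)%nat).
  { eapply Nat.le_trans; [apply Nat.pow_le_mono_l with (b := (4 * n)%nat); lia |].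
    rewrite Nat.pow_mul_l. apply Nat.mul_le_mono_r, Nat.pow_le_mono_r; lia. }
  assert (H2 : (b ^ b <= n ^ b)%nat) by (apply Nat.pow_le_mono_l; lia).
  assert (H3 : (n ^ ka * n ^ b <= n ^ n)%nat) by (rewrite <- Nat.pow_add_r; apply Nat.pow_le_mono_r; lia).
  assert (H4 : (4 ^ k <= (2 ^ (n + k)) ^ 2)%nat).
  { rewrite <- Nat.pow_mul_r. change 4%nat with (2 ^ 2)%nat. rewrite <- Nat.pow_mul_r.
    apply Nat.pow_le_mono_r; lia. }
  assert (H5 : (n ^ n <= (n ^ n) ^ 2)%nat).
  { assert (1 <= n ^ n)%nat by (apply Nat.pow_le_mono_l with (c := n) in Hn; rewrite Nat.pow_1_l in Hn; auto).
    rewrite Nat.pow_2_r. nia. }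
  rewrite (Nat.pow_mul_l (2 ^ (n + k)) (n ^ n) 2).
  eapply Nat.le_trans; [apply Nat.mul_le_mono; [apply H1 | apply H2] |].
  rewrite <- Nat.mul_assoc. apply Nat.mul_le_mono; auto. lia.
Qed.

(* The output of the bilinear estimate, summed trivially over the c primes with
   exponent >= 2, with Pn = |P| and Bn = max P both at most N. *)
Definition bilinear_output (Ln qR Pn Bn Ku Kv : R) (c ka b : nat) : R :=
  Pn ^ c * sqrt (Ln * Pn ^ ka * (Ku * (Ln * Bn ^ ka / qR + 1)) *
                 (Pn ^ b * qR * (Kv * (Bn ^ b / qR + 1)))).

Lemma bilinear_output_sq (N Ln qR Pn Bn Ku Kv : R) (c ka b : nat) :
  1 <= Ln -> 1 <= qR -> 0 <= Pn <= N -> 0 <= Bn <= N -> 0 <= Ku -> 0 <= Kv ->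
  (Pn ^ c) ^ 2 * (Ln * Pn ^ ka * (Ku * (Ln * Bn ^ ka / qR + 1)) * (Pn ^ b * qR * (Kv * (Bn ^ b / qR + 1))))
  <= Ku * Kv * (N ^ (2 * c + (ka + b)) * Ln * ((Ln * N ^ ka + qR) * (N ^ b + qR) / qR)).
Proof.
  intros HL Hq HP HB HKu HKv.
  replace ((Pn ^ c) ^ 2 * (Ln * Pn ^ ka * (Ku * (Ln * Bn ^ ka / qR + 1)) * (Pn ^ b * qR * (Kv * (Bn ^ b / qR + 1)))))
    with (Ku * Kv * (Pn ^ (2 * c + (ka + b)) * Ln * ((Ln * Bn ^ ka + qR) * (Bn ^ b + qR) / qR)))
    by (rewrite !pow_add, <- pow_mult, (Nat.mul_comm 2 c), pow_mult; field; lra).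
  apply Rmult_le_compat_l; [nra |].
  assert (Hp : 0 <= Pn ^ (2 * c + (ka + b)) <= N ^ (2 * c + (ka + b))) by (split; [apply pow_le | apply pow_incr]; lra).
  assert (Hka : 0 <= Bn ^ ka <= N ^ ka) by (split; [apply pow_le | apply pow_incr]; lra).
  assert (Hb : 0 <= Bn ^ b <= N ^ b) by (split; [apply pow_le | apply pow_incr]; lra).
  assert (Hi : 0 < / qR) by (apply Rinv_0_lt_compat; lra).
  assert (Hprod : 0 <= (Ln * Bn ^ ka + qR) * (Bn ^ b + qR) <= (Ln * N ^ ka + qR) * (N ^ b + qR)).
  { split; [apply Rmult_le_pos; nra |]. apply Rmult_le_compat; nra. }
  unfold Rdiv. apply Rmult_le_compat; [apply Rmult_le_pos; lra | apply Rmult_le_pos; lra | |].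
  - apply Rmult_le_compat_r; lra.
  - apply Rmult_le_compat_r; lra.
Qed.

Lemma bilinear_output_bound (N Ln qR Pn Bn Ku Kv Cst : R) (n k s c ka b : nat) :
  1 <= N -> 1 <= Ln -> 1 <= qR -> qR <= Ln * N ^ k -> ka = Nat.min k s -> b = (s - ka)%nat ->
  (2 * c + s <= n)%nat -> 0 <= Pn <= N -> 0 <= Bn <= N -> 0 <= Ku -> 0 <= Kv ->
  0 <= Cst -> Ku * Kv <= Cst ^ 2 ->
  bilinear_output Ln qR Pn Bn Ku Kv c ka b
  <= 2 * Cst * Rmax (Ln * Rpower N (INR n / 2 + INR k / 2)) (Ln * N ^ n / sqrt qR).
Proof.
  intros HN HL Hq HqL Hka Hb Hc HP HB HKu HKv HC HK.
  set (M := target_sq N qR n k).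
  assert (HM : 0 <= M) by (eapply Rle_trans; [| apply Rmax_l]; apply pow_le; lra).
  assert (Hpc : 0 <= Pn ^ c) by (apply pow_le; lra).
  set (X := Ln * Pn ^ ka * (Ku * (Ln * Bn ^ ka / qR + 1)) * (Pn ^ b * qR * (Kv * (Bn ^ b / qR + 1)))).
  assert (HX : 0 <= X).
  { assert (0 <= Bn ^ ka) by (apply pow_le; lra). assert (0 <= Bn ^ b) by (apply pow_le; lra).
    assert (0 <= Pn ^ ka) by (apply pow_le; lra). assert (0 <= Pn ^ b) by (apply pow_le; lra).
    assert (0 <= Ln * Bn ^ ka / qR) by (apply div_nonneg; nra).
    assert (0 <= Bn ^ b / qR) by (apply div_nonneg; lra).
    unfold X. repeat apply Rmult_le_pos; nra. }
  assert (Hsq : (Pn ^ c) ^ 2 * X <= (2 * Cst * Ln) ^ 2 * M).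
  { eapply Rle_trans; [apply (bilinear_output_sq N); auto |].
    replace (ka + b)%nat with s by lia.
    eapply Rle_trans; [apply Rmult_le_compat_l; [nra | apply (expanded_bound N Ln qR n k s c ka b); auto] |].
    replace ((2 * Cst * Ln) ^ 2 * M) with (Cst ^ 2 * (4 * (Ln ^ 2 * M))) by ring.
    apply Rmult_le_compat_r; [nra | auto]. }
  unfold bilinear_output. fold X.
  rewrite <- (sqrt_pow2 (Pn ^ c)), <- sqrt_mult by (auto; apply pow_le; auto).
  eapply Rle_trans; [apply sqrt_le_1_alt, Hsq |].
  rewrite sqrt_mult, sqrt_pow2 by (try apply pow2_ge_0; nra).
  rewrite Rmult_assoc. unfold M. rewrite sqrt_target_sq by lra. lra.
Qed.

Lemma zprod_lower_bound (S : list nat) (c : R) : 0 <= c -> (forall p, In p S -> c <= INR p) ->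
  c ^ length S <= IZR (zprod S).
Proof.
  intros Hc. induction S as [|p S IH]; intros H; unfold zprod in *; simpl; [lra |].
  rewrite mult_IZR, <- INR_IZR_INZ.
  pose proof (IH (fun j Hj => H j (or_intror Hj))). pose proof (pow_le c (length S) Hc).
  apply Rmult_le_compat; auto. apply H. left. auto.
Qed.

Lemma list_max_in (l : list nat) : l <> [] -> In (list_max l) l.
Proof.
  induction l as [|x l IH]; intros Hne; [congruence |].
  change (list_max (x :: l)) with (Nat.max x (list_max l)).
  destruct (Nat.max_spec x (list_max l)) as [[Hlt E] | [_ E]]; rewrite E; [right | left; auto].
  apply IH. intros ->. simpl in Hlt. lia.
Qed.

Section PrimesNearN.
Variables (N : R) (Q : nat) (P : list nat).
Hypothesis N_ge_4 : 4 <= N.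
Hypothesis P_nodup : NoDup P.
Hypothesis P_spec : forall p, In p P ->
  prime (Z.of_nat p) /\ N / 2 <= INR p <= N /\ ~ (Z.of_nat p | Z.of_nat Q)%Z.

Lemma P_prime p : In p P -> prime (Z.of_nat p).
Proof. intros Hp. apply P_spec. auto. Qed.

(* An integer 1 <= w <= N^e has at most 2e prime divisors in [N/2, N]:
   their product divides w and is at least (N/2)^(#divisors) >= N^(#divisors/2). *)
Lemma few_prime_divisors (w : Z) (e : nat) :
  (1 <= w)%Z -> IZR w <= N ^ e -> (length (prime_divisors P w) <= 2 * e)%nat.
Proof.
  intros Hw HwN. set (S := prime_divisors P w).
  assert (Hdiv : (zprod S | w)%Z).
  { apply zprod_divides; [apply NoDup_filter; auto |].
    intros p Hp. apply in_prime_divisors in Hp. split; [apply P_prime |]; tauto. }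
  apply Z.divide_pos_le in Hdiv; [| lia]. apply IZR_le in Hdiv.
  assert (Hhalf : (N / 2) ^ length S <= N ^ e).
  { eapply Rle_trans; [apply zprod_lower_bound | lra]; [lra |].
    intros p Hp. apply in_prime_divisors in Hp. apply P_spec. tauto. }
  destruct (le_lt_dec (length S) (2 * e)) as [| Hlt]; auto. exfalso.
  assert (N ^ length S <= N ^ (2 * e)).
  { apply Rle_trans with (((N / 2) ^ length S) ^ 2).
    - rewrite <- pow_mult, Nat.mul_comm, pow_mult. apply pow_incr. split; [lra | nra].
    - rewrite (Nat.mul_comm 2 e), pow_mult. apply pow_incr. split; [apply pow_le; lra | auto]. }
  pose proof (Rlt_pow N (2 * e) (length S) ltac:(lra) Hlt). lra.
Qed.

Lemma list_max_P : (length P <= list_max P)%nat /\ INR (list_max P) <= N /\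
  forall p, In p P -> (1 <= p <= list_max P)%nat.
Proof.
  assert (Hle : forall p, In p P -> (1 <= p <= list_max P)%nat).
  { intros p Hp. pose proof (prime_ge_2 _ (P_prime p Hp)). split; [lia |].
    assert (Hall : Forall (fun k => k <= list_max P)%nat P) by (apply list_max_le; auto).
    rewrite Forall_forall in Hall. auto. }
  split; [| split; [| exact Hle]].
  - rewrite <- (length_seq (list_max P) 1). apply NoDup_incl_length; auto.
    intros p Hp. apply in_seq. pose proof (Hle p Hp). lia.
  - destruct (list_eq_dec Nat.eq_dec P []) as [E | E].
    + rewrite E. simpl. lra.
    + apply P_spec, list_max_in. auto.
Qed.

Definition u_values (L ka : nat) : list Z :=
  flat_map (fun x => map (fun l => (Z.of_nat l * zprod x)%Z) (seq 1 L)) (tuples P ka).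

Definition v_values (b : nat) : list Z := map zprod (tuples P b).

Lemma length_u_values L ka : length (u_values L ka) = (length P ^ ka * L)%nat.
Proof.
  unfold u_values. rewrite (flat_map_constant_length (c := L)), length_tuples; auto.
  intros x _. rewrite length_map, length_seq. reflexivity.
Qed.

Lemma length_v_values b : length (v_values b) = (length P ^ b)%nat.
Proof. unfold v_values. rewrite length_map, length_tuples. reflexivity. Qed.

Lemma zprod_tuple_range x m : In x (tuples P m) ->
  (1 <= zprod x <= Z.of_nat (list_max P) ^ Z.of_nat m)%Z.
Proof.
  intros Hx. apply in_tuples in Hx. destruct Hx as [<- Hx].
  destruct list_max_P as [_ [_ Hmax]].
  split; [apply zprod_ge_1 | apply zprod_le_pow]; intros p Hp; apply Hmax; auto.
Qed.

Lemma exp_sum_to_bilinear (a : Z) (L : nat) (rs bigs : list nat) (ka b : nat) :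
  Permutation rs (bigs ++ repeat 1%nat ka ++ repeat 1%nat b) ->
  rsum (map (inner_sum_abs P rs a (Z.of_nat Q)) (seq 1 L)) <=
  tuple_sum P bigs (fun w => bilinear_form Q (w * a) (u_values L ka) (v_values b)).
Proof.
  intros Hperm.
  set (th := fun (l : nat) (w : Z) => 2 * PI * (IZR (Z.of_nat l * w * a) / IZR (Z.of_nat Q))).
  set (Ta := tuples P ka). set (Tb := tuples P b).
  assert (Hsplit : forall F, tuple_sum P rs F = tuple_sum P bigs (fun w => rsum (map (fun xa =>
            rsum (map (fun xb => F (w * (zprod xa * zprod xb))%Z) Tb)) Ta))).
  { intros F. rewrite (tuple_sum_perm P _ _ Hperm), tuple_sum_app. apply tuple_sum_ext. intros w.
    rewrite tuple_sum_app, tuple_sum_ones. apply rsum_ext. intros xa _. apply tuple_sum_ones. }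
  assert (Htri : forall l, inner_sum_abs P rs a (Z.of_nat Q) l <= tuple_sum P bigs (fun w => rsum (map (fun xa =>
       cabs (rsum (map (fun xb => cos (th l (w * (zprod xa * zprod xb))%Z)) Tb))
            (rsum (map (fun xb => sin (th l (w * (zprod xa * zprod xb))%Z)) Tb))) Ta))).
  { intros l.
    replace (inner_sum_abs P rs a (Z.of_nat Q) l)
      with (cabs (tuple_sum P rs (fun w => cos (th l w))) (tuple_sum P rs (fun w => sin (th l w))))
      by (unfold inner_sum_abs, abs_exp_sum, cabs, tuple_sum; rewrite !map_map; reflexivity).
    rewrite !Hsplit. eapply Rle_trans; [apply tuple_sum_triangle |].
    apply tuple_sum_le. intros x _. apply cabs_triangle_sum. }
  eapply Rle_trans; [apply rsum_le; intros l _; apply Htri |].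
  rewrite tuple_sum_exchange. right. apply tuple_sum_ext. intros w.
  rewrite rsum_exchange. unfold bilinear_form, u_values. rewrite rsum_flat_map. apply rsum_ext. intros xa _.
  rewrite map_map. apply rsum_ext. intros l _. unfold v_values. rewrite !map_map.
  assert (E : forall xb, th l (w * (zprod xa * zprod xb))%Z = phase Q (w * a) (Z.of_nat l * zprod xa) (zprod xb)).
  { intros xb. unfold th, phase. rewrite <- INR_IZR_INZ.
    replace (Z.of_nat l * (w * (zprod xa * zprod xb)) * a)%Z
      with (Z.of_nat l * zprod xa * zprod xb * (w * a))%Z by ring.
    reflexivity. }
  f_equal; apply rsum_ext; intros xb _; rewrite E; reflexivity.
Qed.

(* The bilinear estimate with the ranges and multiplicities of u and v:
   R_u = L (max P)^ka, K_u = (2(n+ka))^ka, R_v = (max P)^b, K_v = b^b. *)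
Lemma bilinear_bound_primes (c : Z) (n L ka b : nat) :
  (0 < Q)%nat -> rel_prime c (Z.of_nat Q) -> INR L <= N ^ n ->
  bilinear_form Q c (u_values L ka) (v_values b) <=
  sqrt (INR L * INR (length P) ^ ka * (INR ((2 * (n + ka)) ^ ka) * (INR L * INR (list_max P) ^ ka / INR Q + 1)) *
        (INR (length P) ^ b * INR Q * (INR (b ^ b) * (INR (list_max P) ^ b / INR Q + 1)))).
Proof.
  intros HQ Hc HLN.
  destruct list_max_P as [_ [HBN _]].
  set (Bm := list_max P) in *.
  assert (Hu : forall x, In x (u_values L ka) -> (1 <= x <= Z.of_nat (L * Bm ^ ka))%Z).
  { intros x Hx. apply in_flat_map in Hx. destruct Hx as [xa [Hxa Hx]].
    apply in_map_iff in Hx. destruct Hx as [l [<- Hl]]. apply in_seq in Hl.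
    pose proof (zprod_tuple_range xa ka Hxa) as Hr. fold Bm in Hr. rewrite Nat2Z.inj_mul, Nat2Z.inj_pow. nia. }
  assert (HKu : forall w, (length (filter (Z.eqb w) (u_values L ka)) <= (2 * (n + ka)) ^ ka)%nat).
  { intros w. destruct (filter (Z.eqb w) (u_values L ka)) as [|u0 rest] eqn:Ef; [simpl; lia |].
    assert (Hu0 : In u0 (filter (Z.eqb w) (u_values L ka))) by (rewrite Ef; left; auto).
    apply filter_In in Hu0. destruct Hu0 as [Hu0 Hwu]. apply Z.eqb_eq in Hwu. subst u0.
    pose proof (Hu w Hu0) as Hwr. rewrite <- Ef.
    eapply Nat.le_trans; [apply scaled_product_multiplicity; auto using P_prime |].
    apply Nat.pow_le_mono_l, few_prime_divisors; [lia |].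
    eapply Rle_trans; [apply IZR_le, Hwr |].
    rewrite <- INR_IZR_INZ, mult_INR, pow_INR, pow_add.
    apply Rmult_le_compat; auto using pos_INR; [apply pow_le, pos_INR |].
    apply pow_incr. split; auto using pos_INR. }
  assert (Hv : forall x, In x (v_values b) -> (1 <= x <= Z.of_nat (Bm ^ b))%Z).
  { intros x Hx. apply in_map_iff in Hx. destruct Hx as [xb [<- Hxb]].
    pose proof (zprod_tuple_range xb b Hxb) as Hr. fold Bm in Hr. rewrite Nat2Z.inj_pow. lia. }
  eapply Rle_trans.
  { apply (bilinear_bound Q c HQ Hc _ _ (L * Bm ^ ka) (Bm ^ b) ((2 * (n + ka)) ^ ka) (b ^ b)); auto.
    intros w. apply product_multiplicity; auto using P_prime. }
  rewrite length_u_values, length_v_values. right. f_equal.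
  rewrite !mult_INR, !pow_INR. ring.
Qed.

Lemma prime_sum_bound (a : Z) (n L : nat) (rs bigs : list nat) (ka b : nat) :
  (0 < Q)%nat -> Z.gcd a (Z.of_nat Q) = 1%Z -> INR L <= N ^ n ->
  Permutation rs (bigs ++ repeat 1%nat ka ++ repeat 1%nat b) ->
  rsum (map (inner_sum_abs P rs a (Z.of_nat Q)) (seq 1 L)) <=
  bilinear_output (INR L) (INR Q) (INR (length P)) (INR (list_max P))
                  (INR ((2 * (n + ka)) ^ ka)) (INR (b ^ b)) (length bigs) ka b.
Proof.
  intros HQ Hgcd HLN Hperm.
  eapply Rle_trans; [apply exp_sum_to_bilinear; eauto |].
  eapply Rle_trans.
  { apply tuple_sum_le with (g := fun _ =>
      sqrt (INR L * INR (length P) ^ ka * (INR ((2 * (n + ka)) ^ ka) * (INR L * INR (list_max P) ^ ka / INR Q + 1)) *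
            (INR (length P) ^ b * INR Q * (INR (b ^ b) * (INR (list_max P) ^ b / INR Q + 1))))).
    intros x Hx.
    apply bilinear_bound_primes; auto. apply rel_prime_sym, rel_prime_mult; apply rel_prime_sym.
    - apply rel_prime_monomial. intros p Hp. apply in_tuples in Hx.
      pose proof (P_spec p (proj2 Hx p Hp)). tauto.
    - apply Zgcd_1_rel_prime. auto. }
  rewrite tuple_sum_const, pow_INR. right. reflexivity.
Qed.

End PrimesNearN.

Lemma split_exponents (rs : list nat) (n : nat) :
  (forall r, In r rs -> (0 < r)%nat) -> fold_right Nat.add 0%nat rs = n ->
  exists bigs s, Permutation rs (bigs ++ repeat 1%nat s) /\ (2 * length bigs + s <= n)%nat.
Proof.
  intros Hpos. revert n. induction rs as [|r rs IH]; intros n Hsum.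
  - exists [], 0%nat. simpl in *. split; [constructor | lia].
  - simpl in Hsum. destruct (IH (fun r' Hr' => Hpos r' (or_intror Hr')) _ eq_refl) as [bigs [s [Hp Hle]]].
    pose proof (Hpos r (or_introl eq_refl)).
    destruct (Nat.eq_dec r 1) as [-> | Hr].
    + exists bigs, (S s). split; [| lia].
      simpl repeat. apply Permutation_cons_app. auto.
    + exists (r :: bigs), s. split; [simpl; constructor; auto | simpl length; lia].
Qed.

Theorem lemma2 :
  exists C : R, 0 < C /\
  forall (a q : Z) (n k L : nat) (N : R) (P : list nat) (rs : list nat),
    (1 <= q)%Z -> Z.gcd a q = 1%Z ->
    (0 < n)%nat -> (0 < k)%nat -> (0 < L)%nat -> 1 <= N ->
    INR L <= N ^ n ->
    IZR q <= INR L * N ^ k ->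
    2 ^ (n + k + 1) < N ->
    (* P enumerates (without repetition) the primes in [N/2, N] not dividing q *)
    NoDup P ->
    (forall p : nat, In p P <->
       (prime (Z.of_nat p) /\ N / 2 <= INR p <= N /\ ~ (Z.of_nat p | q)%Z)) ->
    (* rs = [r_1; ...; r_m], with 1 <= m <= n, r_i >= 1, sum r_i = n *)
    (1 <= length rs <= n)%nat ->
    (forall r, In r rs -> (0 < r)%nat) ->
    fold_right Nat.add 0%nat rs = n ->
    rsum (map (inner_sum_abs P rs a q) (seq 1 L))
      <= C * 2 ^ (n + k) * INR n ^ n *
         Rmax (INR L * Rpower N (INR n / 2 + INR k / 2))
              (INR L * N ^ n / sqrt (IZR q)).
Proof.
  exists 2. split; [lra |].
  intros a q n k L N P rs Hq Hgcd Hn _ HL HN HLN HqL HN2 HPnd HPdef _ Hpos Hsum.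
  destruct (Z_of_nat_complete q) as [Q ->]; [lia |].
  rewrite <- INR_IZR_INZ in *.
  assert (HN4 : 4 <= N).
  { assert (4 <= 2 ^ (n + k + 1)) by (replace 4 with (2 ^ 2) by ring; apply Rle_pow; [lra | lia]). lra. }
  assert (HP : forall p, In p P -> prime (Z.of_nat p) /\ N / 2 <= INR p <= N /\ ~ (Z.of_nat p | Z.of_nat Q)%Z)
    by (intros p; apply HPdef).
  destruct (list_max_P N Q P HN4 HPnd HP) as [HlenP [HmaxP _]].
  destruct (split_exponents rs n Hpos Hsum) as [bigs [s [Hperm Hcs]]].
  set (ka := Nat.min k s). set (b := (s - ka)%nat).
  assert (Hperm' : Permutation rs (bigs ++ repeat 1%nat ka ++ repeat 1%nat b))
    by (rewrite <- repeat_app; replace (ka + b)%nat with s by lia; exact Hperm).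
  eapply Rle_trans; [apply (prime_sum_bound N Q P HN4 HPnd HP a n L rs bigs ka b); auto; lia |].
  assert (HKK : INR ((2 * (n + ka)) ^ ka) * INR (b ^ b) <= (2 ^ (n + k) * INR n ^ n) ^ 2).
  { rewrite <- mult_INR, <- (pow_INR 2), <- pow_INR, <- mult_INR, <- pow_INR.
    apply le_INR, multiplicity_constants; lia. }
  eapply Rle_trans.
  { apply bilinear_output_bound with (N := N) (n := n) (k := k) (s := s) (Cst := 2 ^ (n + k) * INR n ^ n);
      auto using pos_INR.
    - apply (le_INR 1). lia.
    - apply (le_INR 1). lia.
    - split; [apply pos_INR | eapply Rle_trans; [apply le_INR, HlenP | auto]].
    - apply Rmult_le_pos; apply pow_le; [lra | apply pos_INR]. }
  right. ring.
Qed.
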